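(* Let $\mathcal S=(E,\mathcal I)$ and $\mathcal S'=(E',\mathcal I')$ be $r$-covering systems with $|E|=|E'|$ that are similar, i.e., there is a bijection $\psi:\mathcal I\to\mathcal I'$ with $|\psi(X)|=|X|$ for all $X\in\mathcal I$. If $\texttt{a}$ is an activity of $\mathcal S$ and $\texttt{a}'$ is an activity of $\mathcal S'$, then their activity vectors are equal.
   Context: For finite sets $X\subseteq Y$, write $[X,Y]=\{Z: X\subseteq Z\subseteq Y\}$. An $r$-covering system is a pair $\mathcal S=(E,\mathcal I)$ where $E$ is a finite set and $\mathcal I$ is a collection of subsets of $E$, each of cardinality at most $r$, such that for every $I\in\mathcal I$ there exists $B\in\mathcal I$ with $|B|=r$ and $[I,B]\subseteq\mathcal I$. Members of $\mathcal I$ of cardinality $r$ are called bases, and $\mathcal B$ denotes the set of bases. An activity of $\mathcal S$ is a function $\texttt{a}:\mathcal B\to 2^E$ such that for every $B\in\mathcal B$, $\texttt{a}(B)\subseteq B$ and $[B\setminus\texttt{a}(B),B]\subseteq\mathcal I$, and such that every $I\in\mathcal I$ belongs to $[B\setminus\texttt{a}(B),B]$ for exactly one $B\in\mathcal B$. The activity vector is $(a_0,\dots,a_r)$ where $a_i$ is the number of bases $B$ with $|\texttt{a}(B)|=i$. *)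

From mathcomp Require Import all_boot.
Set Implicit Arguments. Unset Strict Implicit. Unset Printing Implicit Defensive.

Definition interval (E : finType) (X Y : {set E}) : {set {set E}} :=
  [set Z : {set E} | (X \subset Z) && (Z \subset Y)].

Definition covering_system (E : finType) (r : nat) (I : {set {set E}}) : Prop :=
  (forall X, X \in I -> #|X| <= r) /\
  (forall X, X \in I -> exists B, [/\ B \in I, #|B| = r & interval X B \subset I]).

Definition bases (E : finType) (r : nat) (I : {set {set E}}) : {set {set E}} :=
  [set B in I | #|B| == r].

(* activity: only the values on bases matter *)
Definition activity (E : finType) (r : nat) (I : {set {set E}})
  (a : {set E} -> {set E}) : Prop :=
  (forall B, B \in bases r I -> a B \subset B /\ interval (B :\: a B) B \subset I) /\
  (forall X, X \in I -> exists! B, B \in bases r I /\ X \in interval (B :\: a B) B).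

Definition activity_count (E : finType) (r : nat) (I : {set {set E}})
  (a : {set E} -> {set E}) (i : nat) : nat :=
  #|[set B in bases r I | #|a B| == i]|.

Definition similar (E E' : finType) (I : {set {set E}}) (I' : {set {set E'}}) : Prop :=
  exists psi : {set E} -> {set E'},
    [/\ {in I &, injective psi}, psi @: I = I' & forall X, X \in I -> #|psi X| = #|X|].

From mathcomp Require Import all_boot.
Set Implicit Arguments. Unset Strict Implicit. Unset Printing Implicit Defensive.

(* Count the members of I of size r - m in two ways. Each of them lies in
   exactly one interval [B \ a(B), B], and that interval contains 'C(|a(B)|, m)
   sets of size r - m; hence N_(r-m) = sum_j a_j 'C(j, m), where a_j is the
   activity vector. The numbers N_k only depend on the sizes of the members of
   I, so they are preserved by similarity, and the system in the a_j is
   triangular with unit diagonal, so it determines them. *)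

Lemma binomial_transform_inj (n : nat) (f g : nat -> nat) :
  (forall m, \sum_(j < n) f j * 'C(j, m) = \sum_(j < n) g j * 'C(j, m)) ->
  forall i, i < n -> f i = g i.
Proof.
elim: n => [|n IHn] eq_fg i //.
have eq_fg_n : f n = g n.
  have low0 (h : nat -> nat) : \sum_(j < n) h j * 'C(j, n) = 0.
    by rewrite big1 // => j _; rewrite bin_small ?muln0.
  by have := eq_fg n; rewrite !big_ord_recr /= !low0 binn !muln1.
rewrite ltnS leq_eqVlt => /predU1P [-> // | lt_in].
apply: IHn lt_in => m.
by apply/(@addIn (f n * 'C(n, m))); have := eq_fg m; rewrite !big_ord_recr /= eq_fg_n.
Qed.

Lemma similar_card_by_size (E E' : finType) (I : {set {set E}}) (I' : {set {set E'}})
  (p : pred nat) :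
  similar I I' -> #|[set X in I | p #|X|]| = #|[set X in I' | p #|X|]|.
Proof.
case=> psi [psi_inj <- psi_card].
have -> : [set Y in psi @: I | p #|Y|] = psi @: [set X in I | p #|X|].
  apply/setP => Y; rewrite inE; apply/andP/imsetP => [[/imsetP [X XI ->]] | [X]].
    by rewrite psi_card // => pX; exists X; rewrite ?inE ?XI.
  by rewrite inE => /andP [XI pX] ->; rewrite imset_f // psi_card.
rewrite card_in_imset // => X1 X2; rewrite !inE => /andP [X1I _] /andP [X2I _].
exact: psi_inj.
Qed.

Lemma card_interval_setD (E : finType) (A B : {set E}) (m : nat) :
  A \subset B ->
  #|[set X in interval (B :\: A) B | #|X| + m == #|B|]| = 'C(#|A|, m).
Proof.
move=> sAB; rewrite -cards_draws.
have setDK (S : {set E}) : S \subset B -> B :\: (B :\: S) = S.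
  by move/setIidPr => sSB; rewrite setDDr setDv set0U sSB.
have card_setD (S : {set E}) : S \subset B -> #|B :\: S| + #|S| = #|B|.
  by move=> sSB; rewrite cardsD (setIidPr sSB) subnK ?subset_leq_card.
have -> : [set X in interval (B :\: A) B | #|X| + m == #|B|] =
          (fun S => B :\: S) @: [set S : {set E} | S \subset A & #|S| == m].
  apply/setP => X; rewrite !inE; apply/idP/imsetP => [/andP [/andP [sDX sXB] cardX] | [S]].
    exists (B :\: X); last by rewrite setDK.
    rewrite inE subDset setUC -subDset sDX -(eqn_add2l #|X|) addnC card_setD //.
    by rewrite eq_sym.
  rewrite inE => /andP [sSA /eqP cardS] ->.
  have sSB := subset_trans sSA sAB.
  by rewrite setDS // subsetDl -cardS card_setD ?eqxx.
rewrite card_in_imset // => S1 S2; rewrite !inE => /andP [sS1A _] /andP [sS2A _] eqD.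
by rewrite -(setDK S1) ?(subset_trans sS1A sAB) // eqD setDK ?(subset_trans sS2A sAB).
Qed.

Section Activity.

Variables (E : finType) (r : nat) (I : {set {set E}}) (a : {set E} -> {set E}).
Hypothesis act : activity r I a.

Lemma activity_cover_once X :
  X \in I -> \sum_(B in bases r I) (X \in interval (B :\: a B) B) = 1.
Proof.
case: act => _ cover /cover [B [[BI XB] B_uniq]].
rewrite (bigD1 B) //= XB big1 // => B' /andP [B'I neqB'].
case: (boolP (X \in _)) => // XB'.
by rewrite (B_uniq B' (conj B'I XB')) eqxx in neqB'.
Qed.

Lemma card_activity_partition (P : pred {set E}) :
  #|[set X in I | P X]| =
  \sum_(B in bases r I) #|[set X in interval (B :\: a B) B | P X]|.
Proof.
rewrite -sum1_card.
transitivity (\sum_(X in [set X in I | P X])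
                \sum_(B in bases r I) (X \in interval (B :\: a B) B)).
  by apply: eq_bigr => X; rewrite inE => /andP [/activity_cover_once ->].
rewrite exchange_big; apply: eq_bigr => B /(proj1 act) [_ sub_I].
rewrite -sum1_card big_mkcond [RHS]big_mkcond /=; apply: eq_bigr => X _.
rewrite !inE; case XJ: ((B :\: a B \subset X) && (X \subset B)); last by case: ifP.
have XI : X \in I by apply: (subsetP sub_I); rewrite inE XJ.
by rewrite XI; case: (P X).
Qed.

Lemma card_activity_le B : B \in bases r I -> #|a B| <= r.
Proof.
move=> BI; have [sub_aB _] := proj1 act B BI.
by move: BI; rewrite inE => /andP [_ /eqP <-]; apply: subset_leq_card.
Qed.

Lemma sum_bin_activity m :
  \sum_(B in bases r I) 'C(#|a B|, m) =
  \sum_(j < r.+1) activity_count r I a j * 'C(j, m).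
Proof.
rewrite (partition_big (fun B => inord #|a B| : 'I_r.+1) predT) //=.
apply: eq_bigr => j _; rewrite /activity_count -sum_nat_const.
apply: eq_big => [B | B /andP [BI /eqP <-]]; last by rewrite inordK // ltnS card_activity_le.
rewrite inE; case: (boolP (B \in _)) => //= BI.
by rewrite -(inj_eq val_inj) /= inordK // ltnS card_activity_le.
Qed.

Lemma card_corank_activity m :
  #|[set X in I | #|X| + m == r]| =
  \sum_(j < r.+1) activity_count r I a j * 'C(j, m).
Proof.
rewrite card_activity_partition -sum_bin_activity; apply: eq_bigr => B BI.
have [sub_aB _] := proj1 act B BI.
have /eqP cardB : #|B| == r by move: BI; rewrite inE => /andP [].
by rewrite -cardB card_interval_setD.
Qed.

End Activity.

Theorem mainTheorem5 (E E' : finType) (r : nat)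
  (I : {set {set E}}) (I' : {set {set E'}})
  (a : {set E} -> {set E}) (a' : {set E'} -> {set E'}) :
  covering_system r I -> covering_system r I' ->
  #|E| = #|E'| -> similar I I' ->
  activity r I a -> activity r I' a' ->
  forall i, i <= r -> activity_count r I a i = activity_count r I' a' i.
Proof.
move=> _ _ _ simII' act act' i le_ir.
apply: (@binomial_transform_inj r.+1) le_ir => m.
by rewrite -!card_corank_activity // (similar_card_by_size (fun k => k + m == r) simII').
Qed.
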